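(* Let $q\in\mathbb{C}$ with $q\neq 0,1$ and $q$ not a root of unity. Let $(L,\sigma,\theta^{*})$ be a (commutative) qsi field extension of $\mathbb{C}$. If a matrix $Y=(y_{ij})\in \mathrm{M}_2(L)$ satisfies \[ \sigma Y=\begin{bmatrix} q&0\\0&1\end{bmatrix}Y \quad\text{and}\quad \theta^{(1)}Y=\begin{bmatrix}0&1\\0&0\end{bmatrix}Y \] (with $\sigma,\theta^{(1)}$ applied entrywise), then $\det Y=0$.
   Context: Fix $q\in\mathbb{C}$, $q\neq0,1$, not a root of unity; put $[m]_q=1+q+\dots+q^{m-1}$ and $[m]_q!=[1]_q[2]_q\cdots[m]_q$. A qsi (q-SI $\sigma$-differential) algebra over $\mathbb{C}$ is a triple $(A,\sigma,\theta^{*})$ where $A$ is a $\mathbb{C}$-algebra, $\sigma:A\to A$ is a $\mathbb{C}$-algebra automorphism, $\theta^{*}=\{\theta^{(m)}\}_{m\in\mathbb{N}}$ is a family of $\mathbb{C}$-linear maps $A\to A$ with $\theta^{(0)}=\mathrm{Id}_A$, $\theta^{(m)}=\frac{1}{[m]_q!}(\theta^{(1)})^m$, and $\theta^{(1)}$ satisfies the twisted Leibniz rule $\theta^{(1)}(ab)=\theta^{(1)}(a)\,b+\sigma(a)\,\theta^{(1)}(b)$ and $\theta^{(1)}\circ\sigma=q\,\sigma\circ\theta^{(1)}$, with $\sigma$ and $\theta^{(1)}$ acting on $\mathbb{C}$ as the identity and zero respectively. A qsi field is a qsi algebra whose underlying ring is a commutative field. The model example is $\mathbb{C}(t)$ with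 $\sigma(f)(t)=f(qt)$ and $\theta^{(1)}f=\frac{f(qt)-f(t)}{(q-1)t}$. *)

From HB Require Import structures.
From mathcomp Require Import all_boot all_order all_algebra.
Set Implicit Arguments. Unset Strict Implicit. Unset Printing Implicit Defensive.
Import Order.TTheory GRing.Theory Num.Theory.
Local Open Scope ring_scope.

Definition qint (C : nzRingType) (q : C) (m : nat) : C := \sum_(i < m) q ^+ i.
Definition qfact (C : nzRingType) (q : C) (m : nat) : C :=
  \prod_(1 <= k < m.+1) qint q k.

(* (L, sigma, thetas) is a qsi field over C, where L is a (commutative) field
   made into a C-algebra via the ring morphism iota : C -> L.
   thetas m is theta^(m); thetas 1 is theta^(1). *)
Definition qsi_field (C : fieldType) (q : C) (L : fieldType)
    (iota : {rmorphism C -> L}) (sigma : L -> L) (thetas : nat -> L -> L) : Prop :=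
  [/\ (forall a b, sigma (a + b) = sigma a + sigma b),
      (forall a b, sigma (a * b) = sigma a * sigma b),
      sigma 1 = 1,
      bijective sigma &
      (forall c, sigma (iota c) = iota c)] /\
  (forall m a b, thetas m (a + b) = thetas m a + thetas m b) /\
  (forall m c a, thetas m (iota c * a) = iota c * thetas m a) /\
  (forall a, thetas 0%N a = a) /\
  (forall m a, thetas m a = (iota (qfact q m))^-1 * iter m (thetas 1%N) a) /\
  (forall a b, thetas 1%N (a * b) = thetas 1%N a * b + sigma a * thetas 1%N b) /\
  (forall a, thetas 1%N (sigma a) = iota q * sigma (thetas 1%N a)) /\
  (forall c, thetas 1%N (iota c) = 0).

From HB Require Import structures.
From mathcomp Require Import all_boot all_order all_algebra.
From mathcomp Require Import ring.
Import Order.TTheory GRing.Theory Num.Theory.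
Local Open Scope ring_scope.

(* Write the first row of Y as (a, b) and the second as (a', b').
   The two matrix equations say, on the first row, that sigma a = q a,
   sigma b = q b, theta a = a' and theta b = b'.  In a commutative ring a
   sigma-derivation theta must give the same value on a * b and on b * a;
   expanding both with the twisted Leibniz rule yields
       a' b + q a b' = b' a + q b a',   i.e.   (q - 1) (a b' - b a') = 0.
   Since a b' - b a' = det Y and q != 1, the determinant vanishes. *)

Section SigmaDerivation.

Variables (R : comNzRingType) (sigma theta : R -> R).
Hypothesis theta_leibniz :
  forall a b, theta (a * b) = theta a * b + sigma a * theta b.

Lemma sigma_derivation_swap (a b : R) :
  theta a * b + sigma a * theta b = theta b * a + sigma b * theta a.
Proof. by rewrite -!theta_leibniz mulrC. Qed.

Lemma sigma_eigen_wronskian {c a b : R} :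
  sigma a = c * a -> sigma b = c * b ->
  (c - 1) * (a * theta b - b * theta a) = 0.
Proof.
move=> sa sb; have := sigma_derivation_swap a b; rewrite sa sb => swap.
suff -> : (c - 1) * (a * theta b - b * theta a) =
    (theta a * b + c * a * theta b) - (theta b * a + c * b * theta a).
  by rewrite swap subrr.
by ring.
Qed.

End SigmaDerivation.

Arguments sigma_eigen_wronskian {R sigma theta} theta_leibniz {c a b}.

Lemma det_mx22 (R : comNzRingType) (M : 'M[R]_2) :
  \det M = M 0 0 * M 1 1 - M 0 1 * M 1 0.
Proof.
rewrite (expand_det_row _ 0) !big_ord_recr big_ord0 /= /cofactor !det_mx11 !mxE.
have -> : (widen_ord (leqnSn 1) ord_max : 'I_2) = 0 by apply/val_inj.
have -> : (ord_max : 'I_2) = 1 by apply/val_inj.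
have -> : lift (0 : 'I_2) (0 : 'I_1) = 1 by apply/val_inj.
have -> : lift (1 : 'I_2) (0 : 'I_1) = 0 by apply/val_inj.
by rewrite expr0 expr1; ring.
Qed.

Lemma mulmx22_row0 (R : nzRingType) (A Y : 'M[R]_2) (j : 'I_2) :
  (A *m Y) 0 j = A 0 0 * Y 0 j + A 0 1 * Y 1 j.
Proof.
rewrite mxE !big_ord_recr big_ord0 /= add0r.
have -> : (widen_ord (leqnSn 1) ord_max : 'I_2) = 0 by apply/val_inj.
by have -> : (ord_max : 'I_2) = 1 by apply/val_inj.
Qed.

Lemma diag_mulmx_row0 (R : nzRingType) (c : R) (Y : 'M[R]_2) (j : 'I_2) :
  ((\matrix_(i < 2, k < 2)
      (if (i == 0) && (k == 0) then c else if (i == 1) && (k == 1) then 1 else 0))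
     *m Y) 0 j = c * Y 0 j.
Proof. by rewrite mulmx22_row0 !mxE /= mul0r addr0. Qed.

Lemma nilp_mulmx_row0 (R : nzRingType) (Y : 'M[R]_2) (j : 'I_2) :
  ((\matrix_(i < 2, k < 2) (if (i == 0) && (k == 1) then 1 else 0 : R)) *m Y) 0 j
  = Y 1 j.
Proof. by rewrite mulmx22_row0 !mxE /= mul0r mul1r add0r. Qed.

Theorem lemma1 (C : numClosedFieldType) (q : C)
  (hq0 : q != 0) (hq1 : q != 1)
  (hqroot : forall n : nat, (0 < n)%N -> ~~ n.-unity_root q)
  (L : fieldType) (iota : {rmorphism C -> L})
  (sigma : L -> L) (thetas : nat -> L -> L)
  (hL : qsi_field q iota sigma thetas)
  (Y : 'M[L]_2)
  (hsigma : map_mx sigma Y =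
            (\matrix_(i < 2, j < 2)
               (if (i == 0) && (j == 0) then iota q
                else if (i == 1) && (j == 1) then 1 else 0)) *m Y)
  (htheta : map_mx (thetas 1%N) Y =
            (\matrix_(i < 2, j < 2)
               (if (i == 0) && (j == 1) then 1 else 0 : L)) *m Y) :
  \det Y = 0.
Proof.
case: hL => _ [_ [_ [_ [_ [leibniz _]]]]].
have sigma_row0 j : sigma (Y 0 j) = iota q * Y 0 j.
  by rewrite -diag_mulmx_row0 -hsigma mxE.
have theta_row0 j : thetas 1%N (Y 0 j) = Y 1 j.
  by rewrite -nilp_mulmx_row0 -htheta mxE.
have := sigma_eigen_wronskian leibniz (sigma_row0 0) (sigma_row0 1).
rewrite !theta_row0 det_mx22 => /eqP.
by rewrite mulf_eq0 subr_eq0 fmorph_eq1 (negbTE hq1) => /eqP.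
Qed.
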